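(* Assume the setup (S) of the context. Let $\phi\colon H\oplus H^*\to\bigwedge^{\mathrm{even}}H$ be the map $x\mapsto x\cdot s$, and let $\phi^*\colon(\bigwedge^{\mathrm{even}}H)^*\to (H\oplus H^* )^*\cong H\oplus H^*$ be its dual (identification via $\beta$). Then $\operatorname{im}\phi^*\subseteq\operatorname{im}\delta_3$. In particular, the element $(s_1,0)\in H\oplus H^*$ lies in $\operatorname{im}\delta_3$, so there exists $u\in B_1^*$ with $\delta_3(u)=(s_1,0)$.
   Context: Setup (S): $R$ is a Noetherian unique factorization domain with $1/2\in R$; $p\ge1$, $q\ge3$, $n=p+2$; $B_0=R^{q-2}$, $B_1=R^{p+q}$, $H=R^n$. On $H\oplus H^*$ let $Q(f,f')=f'(f)$ and $\beta\big((f,f'),(g,g')\big)=f'(g)+g'(f)$, which identifies $(H\oplus H^* )^*$ with $H\oplus H^*$. Let $\mathbb{B}\colon 0\to B_0^*\xrightarrow{\delta_4}B_1^*\xrightarrow{\delta_3}H\oplus H^*\xrightarrow{\delta_2}B_1\xrightarrow{\delta_1}B_0$ be an acyclic complex with $\delta_2=\delta_3^*$ and $\delta_1=\delta_4^*$ (duals taken using $\beta$). The Clifford action of $H\oplus H^*$ on $\bigwedge H$ is $(f,f')\cdot\omega=f\wedge\omega+\iota_{f'}(\omega)$, where $\iota_{f'}(e_1\wedge\cdots\wedge e_j)=\sum_i(-1)^{i-1}f'(e_i)\,e_1\wedge\cdots\widehat{e_i}\cdots\wedge e_j$. Let $s\in\bigwedge^{\mathrm{odd}}H$ (the spinor coordinates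 of $\mathbb{B}$) be an element such that for every prime $\mathfrak p\notin\operatorname{Supp}H_0(\mathbb{B})$, the image of $s$ generates the $R_{\mathfrak p}$-module $\{\omega\in\bigwedge H_{\mathfrak p}: x\cdot\omega=0\ \forall x\in(\operatorname{im}\delta_3)_{\mathfrak p}\}$ (this encodes that $\operatorname{im}\delta_3$ and $H^*$ lie in different families of maximal isotropic subspaces). Let $s_1\in H$ be the degree-one component of $s$. *)

From HB Require Import structures.
From mathcomp Require Import all_boot all_order all_algebra.
Set Implicit Arguments. Unset Strict Implicit. Unset Printing Implicit Defensive.
Import Order.TTheory GRing.Theory.
Local Open Scope ring_scope.

Section Defs.
Variable R : idomainType.

Definition is_ideal (I : R -> Prop) : Prop :=
  I 0 /\ (forall a b, I a -> I b -> I (a + b)) /\ (forall r a, I a -> I (r * a)).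

Definition is_prime_ideal (P : R -> Prop) : Prop :=
  is_ideal P /\ ~ P 1 /\ (forall a b, P (a * b) -> P a \/ P b).

Definition noetherian_ring : Prop :=
  forall I : nat -> R -> Prop, (forall k, is_ideal (I k)) ->
    (forall k x, I k x -> I k.+1 x) ->
    exists N, forall m, (N <= m)%N -> forall x, I m x -> I N x.

Definition dvdR (a b : R) : Prop := exists c, b = c * a.
Definition assocR (a b : R) : Prop := dvdR a b /\ dvdR b a.
Definition irreducibleR (a : R) : Prop :=
  a != 0 /\ a \isn't a GRing.unit /\
  (forall b c, a = b * c -> b \is a GRing.unit \/ c \is a GRing.unit).

Definition ufd : Prop :=
  (forall a : R, a != 0 -> a \isn't a GRing.unit ->
     exists ps : seq R, (forall x, x \in ps -> irreducibleR x) /\ a = \prod_(x <- ps) x)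
  /\
  (forall ps qs : seq R, (forall x, x \in ps -> irreducibleR x) ->
     (forall x, x \in qs -> irreducibleR x) ->
     assocR (\prod_(x <- ps) x) (\prod_(x <- qs) x) ->
     exists f : 'I_(size ps) -> 'I_(size qs), bijective f /\
       forall i : 'I_(size ps), assocR (nth 0 ps i) (nth 0 qs (f i))).

(** The exterior algebra /\ H of H = R^n, with basis e_S (S subset of 'I_n,
    e_S = e_{s1} /\ ... /\ e_{sk} for s1 < ... < sk); an element is its
    coefficient function. *)
Definition ext (n : nat) := {ffun {set 'I_n} -> R}.

Definition sgnpos n (T : {set 'I_n}) (i : 'I_n) : R :=
  (-1) ^+ #|[set j in T | (j < i)%N]|.

(** Clifford action of H (+) H^* = R^n (+) R^n (a row vector of length n+n,
    first block f in H, second block f' in H^* in dual coordinates) on /\ H: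
    (f,f').w = f /\ w + iota_{f'} w, written out on coefficients. *)
Definition clifford n (x : 'rV[R]_(n + n)) (w : ext n) : ext n :=
  [ffun T : {set 'I_n} =>
     \sum_(i in T) (lsubmx x) 0 i * sgnpos T i * w (T :\ i)
   + \sum_(i in ~: T) (rsubmx x) 0 i * sgnpos T i * w (i |: T)].

Definition beta n (x y : 'rV[R]_(n + n)) : R :=
  \sum_(i < n) ((rsubmx x) 0 i * (lsubmx y) 0 i + (rsubmx y) 0 i * (lsubmx x) 0 i).

Definition pairing m (u v : 'rV[R]_m) : R := \sum_(i < m) u 0 i * v 0 i.

(** Acyclicity of 0 -> B0^* -d4-> B1^* -d3-> H(+)H^* -d2-> B1 -d1-> B0
    (maps act on row vectors by right multiplication). *)
Definition acyclic5 k m l (d4 : 'M[R]_(k, m)) (d3 : 'M[R]_(m, l))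
  (d2 : 'M[R]_(l, m)) (d1 : 'M[R]_(m, k)) : Prop :=
  d4 *m d3 = 0 /\ d3 *m d2 = 0 /\ d2 *m d1 = 0 /\
  (forall v : 'rV_k, v *m d4 = 0 -> v = 0) /\
  (forall v : 'rV_m, v *m d3 = 0 -> exists w : 'rV_k, v = w *m d4) /\
  (forall v : 'rV_l, v *m d2 = 0 -> exists w : 'rV_m, v = w *m d3) /\
  (forall v : 'rV_m, v *m d1 = 0 -> exists w : 'rV_l, v = w *m d2).

(** P is not in Supp(coker d1), i.e. (coker d1)_P = 0: every y/1 vanishes
    in the localization. *)
Definition notin_supp_coker m k (d1 : 'M[R]_(m, k)) (P : R -> Prop) : Prop :=
  forall y : 'rV_k, exists c, ~ P c /\ exists z : 'rV_m, c *: y = z *m d1.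

(** The image of s in /\ H_P generates the R_P-module
    { w in /\ H_P : x.w = 0 for all x in (im d3)_P }, written out with
    fractions (v/a = v'/a' in a localization iff c(a'v - a v') = 0 for some
    c outside P). *)
Definition spinor_generates_at m n (d3 : 'M[R]_(m, n + n)) (s : ext n)
    (P : R -> Prop) : Prop :=
  (* s/1 lies in the module *)
  (forall (b : 'rV_m), exists c, ~ P c /\
      forall S, c * clifford (b *m d3) s S = 0)
  /\
  (* every element w/u of the module is an R_P-multiple (r/t) s of s *)
  (forall (w : ext n) (u : R), ~ P u ->
     (forall (b : 'rV_m), exists c, ~ P c /\
        forall S, c * clifford (b *m d3) w S = 0) ->
     exists r t, ~ P t /\ exists c, ~ P c /\
        forall S, c * (t * w S - u * r * s S) = 0).

(** y lies in the image of phi^* : dual of even part -> dual of H(+)Hdual = H(+)Hdual,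
    where phi(x) = x.s; a linear form on /\^even H is given by its values c S
    on the basis e_S, |S| even. *)
Definition in_im_phistar n (s : ext n) (y : 'rV[R]_(n + n)) : Prop :=
  exists c : {ffun {set 'I_n} -> R}, forall x : 'rV[R]_(n + n),
    beta y x = \sum_(S : {set 'I_n} | ~~ odd #|S|) c S * clifford x s S.

Definition deg1 n (s : ext n) : 'rV[R]_n := \row_i s [set i].

End Defs.

From HB Require Import structures.
From mathcomp Require Import all_boot all_order all_algebra.
Import GRing.Theory.
Local Open Scope ring_scope.

(* Since R is a domain, the zero ideal is prime, and it lies outside the
   support of coker d1 = coker d4^T because d4 is injective, hence of full
   rank over the fraction field.  The spinor hypothesis at the generic point
   therefore says that x . s = 0 for every x in im d3.  Consequently every
   element y of im phi^* is beta-orthogonal to im d3, i.e. y d2 = 0, and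
   exactness at H (+) H^* puts y in im d3.  Finally (s_1, 0) is phi^* of the
   coordinate form on the degree-zero component, since
   beta((s_1, 0), (f, f')) = f'(s_1) = ((f, f') . s)_0. *)

Section GenericPoint.
Context {R : idomainType}.

Local Notation tofrac := (@FracField.tofrac R).

Lemma tofrac_denominator (x : {fraction R}) :
  exists a d : R, d != 0 /\ x * tofrac d = tofrac a.
Proof.
elim/quotW: x => r; exists r.1, r.2; split; first exact: denom_ratioP.
unlock FracField.tofrac; rewrite !piE; apply/eqmodP.
rewrite /= FracField.equivfE /FracField.mulf.
rewrite !numden_Ratio ?mulr1 ?oner_neq0 //; [by rewrite mulrC | exact: denom_ratioP..].
Qed.

Lemma map_tofrac_mx_inj m n : injective (map_mx tofrac : 'M_(m, n) -> _).
Proof.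
move=> A B /matrixP eqAB; apply/matrixP => i j.
by have /eqP := eqAB i j; rewrite !mxE tofrac_eq => /eqP.
Qed.

Lemma mx_clear_denominators {m n} (v : 'M[{fraction R}]_(m, n)) :
  exists d : R, d != 0 /\ exists w : 'M[R]_(m, n), tofrac d *: v = map_mx tofrac w.
Proof.
have [f f_den] := @fin_all_exists _ (fun _ => (R * R)%type)
  (fun ij ad => ad.2 != 0 /\ v ij.1 ij.2 * tofrac ad.2 = tofrac ad.1)
  (fun ij => let: ex_intro a (ex_intro d h) := tofrac_denominator (v ij.1 ij.2)
             in ex_intro _ (a, d) h).
exists (\prod_ij (f ij).2); split.
  by apply/prodf_neq0 => ij _; case: (f_den ij).
exists (\matrix_(i, j) ((f (i, j)).1 * \prod_(ij | ij != (i, j)) (f ij).2)).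
apply/matrixP => i j; rewrite !mxE (bigD1 (i, j)) //= !rmorphM /=.
case: (f_den (i, j)) => _ /= <-.
by rewrite mulrC -mulrA [_ * tofrac _]mulrC mulrA.
Qed.

Lemma row_free_map_tofrac k m (A : 'M[R]_(k, m)) :
  (forall v : 'rV_k, v *m A = 0 -> v = 0) -> row_free (map_mx tofrac A).
Proof.
move=> A_inj; apply: inj_row_free => v vA0.
have [d [d_neq0 [w dv]]] := mx_clear_denominators v.
have /A_inj w0 : w *m A = 0.
  by apply: map_tofrac_mx_inj; rewrite map_mxM -dv -scalemxAl vA0 scaler0 map_mx0.
move: dv; rewrite w0 map_mx0 => /eqP.
by rewrite scaler_eq0 tofrac_eq0 (negbTE d_neq0) => /eqP.
Qed.

(* Over the fraction field A^T is surjective; clearing denominators shows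
   that coker A^T is a torsion module. *)
Lemma coker_trmx_torsion {k m} {A : 'M[R]_(k, m)} :
  (forall v : 'rV_k, v *m A = 0 -> v = 0) ->
  forall y : 'rV[R]_k, exists c, c != 0 /\ exists z : 'rV_m, c *: y = z *m A^T.
Proof.
move=> A_inj y.
have fullAT : row_full (map_mx tofrac A)^T.
  by rewrite /row_full mxrank_tr; exact: row_free_map_tofrac.
have /submxP [D yD] := submx_full (map_mx tofrac y) fullAT.
have [d [d_neq0 [w dD]]] := mx_clear_denominators D.
exists d; split => //; exists w; apply: map_tofrac_mx_inj.
by rewrite map_mxZ yD scalemxAl dD map_mxM map_trmx.
Qed.

Lemma zero_ideal_prime : is_prime_ideal (fun a : R => a = 0).
Proof.
split; [split; [|split] | split].
- by [].
- by move=> a b -> ->; rewrite addr0.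
- by move=> r a ->; rewrite mulr0.
- by apply/eqP; rewrite oner_neq0.
- by move=> a b /eqP; rewrite mulf_eq0 => /orP [] /eqP; [left | right].
Qed.

Lemma zero_ideal_notin_supp_coker_trmx {k m} (A : 'M[R]_(k, m)) :
  (forall v : 'rV_k, v *m A = 0 -> v = 0) ->
  notin_supp_coker A^T (fun a : R => a = 0).
Proof.
move=> A_inj y; have [c [c_neq0 yc]] := coker_trmx_torsion A_inj y.
by exists c; split=> //; apply/eqP.
Qed.

Lemma spinor_generates_at_zero_annihilated {m n}
    {d3 : 'M[R]_(m, n + n)} {s : ext R n} :
  spinor_generates_at d3 s (fun a : R => a = 0) ->
  forall b S, clifford (b *m d3) s S = 0.
Proof.
move=> [s_in _] b S; have [c [c_neq0 cs0]] := s_in b.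
by have /eqP := cs0 S; rewrite mulf_eq0 => /orP [/eqP | /eqP].
Qed.

Lemma im_phistar_beta_orthogonal {m n}
    {d3 : 'M[R]_(m, n + n)} {s : ext R n} {y : 'rV[R]_(n + n)} :
  (forall b S, clifford (b *m d3) s S = 0) ->
  in_im_phistar s y -> forall b, beta y (b *m d3) = 0.
Proof.
by move=> annih [c yc] b; rewrite yc big1 // => S _; rewrite annih mulr0.
Qed.

Lemma pairing_delta m (v : 'rV[R]_m) j :
  pairing v (delta_mx 0 j) = v 0 j.
Proof.
rewrite /pairing (bigD1 j) //= big1 ?addr0 => [|i /negbTE ij].
  by rewrite mxE !eqxx mulr1.
by rewrite mxE ij andbF mulr0.
Qed.

Lemma clifford_set0 n (x : 'rV[R]_(n + n)) (w : ext R n) :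
  clifford x w set0 = \sum_(i < n) rsubmx x 0 i * w [set i].
Proof.
rewrite /clifford ffunE big_pred0 => [|i]; last by rewrite inE.
rewrite add0r; apply: eq_big => [i | i _]; first by rewrite !inE.
rewrite /sgnpos setU0; have -> : [set j in (set0 : {set 'I_n}) | (j < i)%N] = set0.
  by apply/setP => j; rewrite !inE.
by rewrite cards0 expr0 mulr1.
Qed.

Lemma deg1_in_im_phistar {n} (s : ext R n) :
  in_im_phistar s (row_mx (deg1 s) 0).
Proof.
exists [ffun S => (S == set0)%:R] => x.
rewrite (bigD1 set0) ?cards0 //= big1 => [|S /andP [_ /negbTE S0]].
  rewrite ffunE eqxx mul1r addr0 clifford_set0 /beta row_mxKr row_mxKl.
  by apply: eq_bigr => i _; rewrite !mxE mul0r add0r.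
by rewrite ffunE S0 mul0r.
Qed.

End GenericPoint.

Theorem mainTheorem7 (R : idomainType) (p q : nat)
  (hp : (1 <= p)%N) (hq : (3 <= q)%N)
  (HNoeth : noetherian_ring R) (HUFD : ufd R)
  (Hhalf : (2%:R : R) \is a GRing.unit)
  (d4 : 'M[R]_(q - 2, p + q)) (d3 : 'M[R]_(p + q, p.+2 + p.+2))
  (d2 : 'M[R]_(p.+2 + p.+2, p + q)) (d1 : 'M[R]_(p + q, q - 2))
  (Hd2 : forall (x : 'rV[R]_(p.+2 + p.+2)) (b : 'rV[R]_(p + q)),
           pairing (x *m d2) b = beta x (b *m d3))
  (Hd1 : d1 = d4^T)
  (Hacyc : acyclic5 d4 d3 d2 d1)
  (s : ext R p.+2)
  (Hodd : forall S : {set 'I_p.+2}, ~~ odd #|S| -> s S = 0)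
  (Hs : forall P : R -> Prop, is_prime_ideal P -> notin_supp_coker d1 P ->
          spinor_generates_at d3 s P) :
  (forall y : 'rV[R]_(p.+2 + p.+2), in_im_phistar s y ->
     exists b : 'rV[R]_(p + q), y = b *m d3)
  /\ exists u : 'rV[R]_(p + q), u *m d3 = row_mx (deg1 s) 0.
Proof.
have [_ [_ [_ [d4_inj [_ [exact_H _]]]]]] := Hacyc.
have annih : forall b S, clifford (b *m d3) s S = 0.
  apply: spinor_generates_at_zero_annihilated; apply: Hs.
    exact: zero_ideal_prime.
  by rewrite Hd1; exact: zero_ideal_notin_supp_coker_trmx.
have im_phistar_sub y : in_im_phistar s y -> exists b, y = b *m d3.
  move=> /(im_phistar_beta_orthogonal annih) y_orth; apply: exact_H.
  by apply/rowP => j; rewrite -pairing_delta Hd2 y_orth mxE.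
split=> //.
have [u u_im] := im_phistar_sub _ (deg1_in_im_phistar s).
by exists u.
Qed.
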